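(* Let $q \geq 2$ be an integer. If $w_1 \cdots w_\ell$ is a $q$-Kunz word and $v_i := \min\{q-1, w_i\}$ for each $i$, then $v_1 \cdots v_\ell$ is a $(q-1)$-Kunz word.
   Context: A Kunz word of length $\ell$ is a word $w_1 \cdots w_\ell$ of positive integers satisfying the Kunz conditions: $w_i + w_j \geq w_{i+j}$ for all $i,j \geq 1$ with $i + j \leq \ell$, and $w_i + w_j + 1 \geq w_{i+j-\ell-1}$ for all $i,j \leq \ell$ with $i + j > \ell + 1$. A Kunz word is $q$-Kunz if its maximum entry is at most $q$. *)

From mathcomp Require Import all_boot.
Set Implicit Arguments. Unset Strict Implicit. Unset Printing Implicit Defensive.

(* A word w_1 ... w_l is represented as a sequence w : seq nat, with
   w_i := nth 0 w (i-1), so letters are 1-indexed as in the paper. *)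
Definition letter (w : seq nat) (i : nat) : nat := nth 0 w i.-1.

Definition kunz_word (w : seq nat) : Prop :=
  let l := size w in
  (forall i, 1 <= i <= l -> 0 < letter w i) /\
  (forall i j, 1 <= i -> 1 <= j -> i + j <= l ->
      letter w (i + j) <= letter w i + letter w j) /\
  (forall i j, 1 <= i <= l -> 1 <= j <= l -> l.+1 < i + j ->
      letter w (i + j - l.+1) <= letter w i + letter w j + 1).

Definition q_kunz_word (q : nat) (w : seq nat) : Prop :=
  kunz_word w /\ (forall i, 1 <= i <= size w -> letter w i <= q).

From mathcomp Require Import all_boot.

(* Truncation x |-> minn c x is monotone and subadditive, and keeps positive
   numbers positive when c > 0; hence both families of Kunz inequalities, and
   positivity, survive truncating every letter. *)

Lemma leq_minn2l c {m n} : m <= n -> minn c m <= minn c n.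
Proof. by move=> le_mn; rewrite leq_min geq_minl (leq_trans (geq_minr _ _)). Qed.

Lemma leq_minnD c m n : minn c (m + n) <= minn c m + minn c n.
Proof.
have [_ | _] := leqP c m; first by rewrite (leq_trans (geq_minl _ _)) ?leq_addr.
have [_ | _] := leqP c n; first by rewrite (leq_trans (geq_minl _ _)) ?leq_addl.
exact: geq_minr.
Qed.

Lemma leq_minnD1 c m n : minn c (m + n + 1) <= minn c m + minn c n + 1.
Proof.
apply: leq_trans (leq_minnD _ _ _) _.
by rewrite leq_add ?leq_minnD ?geq_minr.
Qed.

Lemma letter_map_minn c w i : letter (map (minn c) w) i = minn c (letter w i).
Proof.
rewrite /letter; have [lt_iw | le_wi] := ltnP i.-1 (size w).
  by rewrite (nth_map 0).
by rewrite !nth_default ?size_map ?minn0.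
Qed.

Lemma kunz_word_map_minn c w :
  0 < c -> kunz_word w -> kunz_word (map (minn c) w).
Proof.
move=> c_gt0 [pos_w [sub_w wrap_w]]; rewrite /kunz_word size_map.
split; [|split] => [i i_in | i j i_gt0 j_gt0 ij_le | i j i_in j_in ij_gt];
  rewrite !letter_map_minn.
- by rewrite leq_min c_gt0 pos_w.
- exact: leq_trans (leq_minn2l c (sub_w i j i_gt0 j_gt0 ij_le)) (leq_minnD _ _ _).
- exact: leq_trans (leq_minn2l c (wrap_w i j i_in j_in ij_gt)) (leq_minnD1 _ _ _).
Qed.

Lemma q_kunz_word_map_minn c w :
  0 < c -> kunz_word w -> q_kunz_word c (map (minn c) w).
Proof.
move=> c_gt0 kunz_w; split; first exact: kunz_word_map_minn.
by move=> i _; rewrite letter_map_minn geq_minl.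
Qed.

Theorem lemma3p8 (q : nat) (w : seq nat) :
  2 <= q -> q_kunz_word q w ->
  q_kunz_word q.-1 [seq minn q.-1 x | x <- w].
Proof.
move=> q_ge2 [kunz_w _].
by apply: q_kunz_word_map_minn kunz_w; rewrite -ltnS prednK ?(ltnW q_ge2).
Qed.
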